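(* For every ordinal $\beta\leq\omega_1$ and every $\alpha<\beta$, in $\mathbb{S}(\beta)$ the fiber $I\times\{\alpha\}$ belongs to $\sigma(\llbracket\mathcal{L}\rrbracket)$.
   Context: An LMP is $(S,\Sigma,\{\tau_a\}_{a\in L})$ with $L$ countable and Markov kernels $\tau_a$. The logic $\mathcal{L}$ has formulas $\phi::=\top\mid\phi\wedge\psi\mid\langle a\rangle_{>q}\phi$ ($a\in L$, $q\in\mathbb{Q}\cap[0,1]$) with $\llbracket\top\rrbracket=S$, $\llbracket\phi\wedge\psi\rrbracket=\llbracket\phi\rrbracket\cap\llbracket\psi\rrbracket$, $\llbracket\langle a\rangle_{>q}\phi\rrbracket=\{s:\tau_a(s,\llbracket\phi\rrbracket)>q\}$; $\sigma(\llbracket\mathcal{L}\rrbracket)$ is the $\sigma$-algebra generated by all $\llbracket\phi\rrbracket$. The processes $\mathbb{S}(\beta)$: $I=(0,1)$, $\mathfrak{m}$ Lebesgue measure, $V\subseteq I$ Lebesgue nonmeasurable, $\mathcal{B}_V=\sigma(\mathcal{B}(I)\cup\{V\})$, and $\mathfrak{m}_0,\mathfrak{m}_1$ measures on $\mathcal{B}_V$ extending $\mathfrak{m}$ with $\mathfrak{m}_0(V)\neq\mathfrak{m}_1(V)$. Let $\{q_n\}_{n\in\omega}$ enumerate $\mathbb{Q}\cap I$. For ordinals $\eta$: $\alpha_n(0)=0$, $\alpha_n(\zeta+1)=\zeta$ for all $n$, and for limit $\lambda$, $(\alpha_n(\lambda))_{n\in\omega}$ is a fixed strictly increasing sequence of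 nonzero ordinals below $\lambda$ cofinal in $\lambda$. For an ordinal $\beta\leq\omega_1$, $\mathbb{S}(\beta)=(I\times\beta,\ \mathcal{B}_V\otimes\mathcal{P}(\beta),\ \{\tau_n\}_{n\in\omega})$ with $\tau_n((x,\eta),A)=x\cdot\mathfrak{m}_0(A_0)$ if $\eta=0$; $=\mathfrak{m}_0(A_{\alpha_n(\eta)})$ if $\eta>0$ and $x<q_n$; $=\mathfrak{m}_1(A_{\alpha_n(\eta)})$ if $\eta>0$ and $x\geq q_n$; here $A_\gamma=\{r:(r,\gamma)\in A\}$. These $\tau_n$ are Markov kernels, so $\mathbb{S}(\beta)$ is an LMP. *)

From mathcomp Require Import all_boot all_order all_algebra.
From mathcomp Require Import all_classical all_reals all_analysis.
Import Order.TTheory GRing.Theory Num.Theory.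
Import numFieldNormedType.Exports.

Set Implicit Arguments.
Unset Strict Implicit.
Unset Printing Implicit Defensive.

Local Open Scope classical_set_scope.
Local Open Scope ring_scope.

(* An ordinal beta <= omega_1 is represented (up to isomorphism) by a
   carrier type B (= the set of ordinals < beta) with a strict well-order
   lt all of whose proper initial segments are countable. *)
Definition ordinal_le_omega1 (B : Type) (lt : B -> B -> Prop) : Prop :=
  [/\ (forall x, ~ lt x x),
      (forall x y z, lt x y -> lt y z -> lt x z),
      (forall x y, [\/ lt x y, x = y | lt y x]),
      well_founded lt &
      (forall b, countable [set c | lt c b])].

Definition is_zero (B : Type) (lt : B -> B -> Prop) (eta : B) : Prop :=
  forall g, ~ lt g eta.

Definition is_succ (B : Type) (lt : B -> B -> Prop) (zeta eta : B) : Prop :=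
  lt zeta eta /\ (forall g, lt g eta -> lt g zeta \/ g = zeta).

Definition is_limit (B : Type) (lt : B -> B -> Prop) (eta : B) : Prop :=
  ~ is_zero lt eta /\ ~ (exists zeta, is_succ lt zeta eta).

Definition alpha_spec (B : Type) (lt : B -> B -> Prop) (alpha : nat -> B -> B)
  : Prop :=
  [/\ (forall n eta, is_zero lt eta -> alpha n eta = eta),
      (forall n zeta eta, is_succ lt zeta eta -> alpha n eta = zeta) &
      (forall lam, is_limit lt lam ->
         [/\ (forall n, lt (alpha n lam) (alpha n.+1 lam)),
             (forall n, ~ is_zero lt (alpha n lam) /\ lt (alpha n lam) lam) &
             (forall g, lt g lam -> exists n, lt g (alpha n lam))])].

Definition Iset (R : realType) : set R := [set x : R | 0 < x < 1].
Arguments Iset : clear implicits.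

Definition lebesgue_measurable (R : realType) (A : set R) : Prop :=
  ((@wlength R idfun)^*%mu).-cara.-measurable A.

(* B_V = sigma(B(I) u {V}), a sigma-algebra on the universe I; B(I) is the
   set of Borel subsets of I. *)
Definition BV (R : realType) (V : set R) : set (set R) :=
  <<s Iset R, [set A | A `<=` Iset R /\ measurable A] `|` [set V] >>.

Definition measure_on (T : Type) (R : realType) (D : set (set T))
  (mu : set T -> \bar R) : Prop :=
  [/\ mu set0 = 0%E,
      (forall A, D A -> (0 <= mu A)%E) &
      (forall F : nat -> set T, (forall n, D (F n)) -> trivIset setT F ->
         (fun n => \sum_(0 <= k < n) mu (F k))%E @ \oo
           --> mu (\bigcup_n F n))].

Definition extends_lebesgue (R : realType) (mu : set R -> \bar R) : Prop :=
  forall A, A `<=` Iset R -> measurable A -> mu A = lebesgue_measure A.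

Definition rat_enum (R : realType) (q : nat -> R) : Prop :=
  [/\ injective q,
      (forall n, exists r : rat, q n = ratr r),
      (forall n, 0 < q n < 1) &
      (forall r : rat, 0 < r < 1 -> exists n, q n = ratr r)].

Definition section (R : realType) (B : Type) (A : set (R * B)) (g : B)
  : set R := [set r | A (r, g)].

Definition Sstate (R : realType) (B : Type) : set (R * B) :=
  Iset R `*` [set: B].
Arguments Sstate : clear implicits.

Definition tauS (R : realType) (B : Type) (lt : B -> B -> Prop)
  (alpha : nat -> B -> B) (q : nat -> R) (m0 m1 : set R -> \bar R)
  (n : nat) (s : R * B) (A : set (R * B)) : \bar R :=
  if pselect (is_zero lt s.2) then ((s.1)%:E * m0 (section A s.2))%E
  else if s.1 < q n then m0 (section A (alpha n s.2))
  else m1 (section A (alpha n s.2)).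

Inductive form : Type :=
  | FTop : form
  | FAnd : form -> form -> form
  | FDiam : nat -> rat -> form -> form.

Fixpoint wf_form (f : form) : bool :=
  match f with
  | FTop => true
  | FAnd f g => wf_form f && wf_form g
  | FDiam _ r f => (0 <= r <= 1) && wf_form f
  end.

Fixpoint sem (R : realType) (T : Type) (S : set T)
  (tau : nat -> T -> set T -> \bar R) (f : form) : set T :=
  match f with
  | FTop => S
  | FAnd f g => sem S tau f `&` sem S tau g
  | FDiam a r f => [set s | S s /\ ((ratr r)%:E < tau a s (sem S tau f))%E]
  end.

Definition sigma_L (R : realType) (T : Type) (S : set T)
  (tau : nat -> T -> set T -> \bar R) : set (set T) :=
  <<s S, [set sem S tau f | f in [set f | wf_form f]] >>.

(* The kernels of S(beta) only ever measure sections of sets, and the sets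
   defined below are "cylinders" { (x,g) | g in D }, whose sections are I or
   empty; since m0 and m1 both give measure 1 to I, the modal formulas
   < n >_{>0} phi move from g to alpha_n(g) without seeing the difference
   between m0 and m1.  Concretely:
   - the formula < 0 >_{>1/2} < 0 >_{>1/2} T defines the cylinder of the
     ordinals g with g <> 0 and alpha_0(g) <> 0, and prefixing < n >_{>0}
     replaces a cylinder D by { g <> 0 | D (alpha_n g) }; so for each word
     w of labels there is a formula defining the cylinder of the ordinals
     whose alpha-path along w stays nonzero ([nonzero_path]);
   - by well-founded induction, these countably many cylinders separate the
     nonzero ordinals ([nonzero_path_inj]), because the sequence
     (alpha_n g)_n determines a nonzero ordinal g ([alpha_inj]);
   - the zero fiber is the countable union of the complements of the sets
     defined by < 0 >_{>r} T for rationals r < 1 close to 1.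
   Every fiber is then a countable Boolean combination of these sets. *)
From Pilot Require Import Defs.
From mathcomp Require Import all_boot all_order all_algebra.
From mathcomp Require Import all_classical all_reals all_analysis.
From mathcomp Require Import lra.
Import Order.TTheory GRing.Theory Num.Theory.

Set Implicit Arguments.
Unset Strict Implicit.
Unset Printing Implicit Defensive.

Local Open Scope classical_set_scope.
Local Open Scope ring_scope.

Section ordinals.
Variables (B : Type) (lt : B -> B -> Prop) (alpha : nat -> B -> B).
Hypothesis ord : ordinal_le_omega1 lt.
Hypothesis asp : alpha_spec lt alpha.

Lemma ordinal_cases g :
  [\/ is_zero lt g, exists z, is_succ lt z g | is_limit lt g].
Proof.
have [|nz] := boolp.EM (is_zero lt g); first exact: Or31.
have [|ns] := boolp.EM (exists z, is_succ lt z g); first exact: Or32.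
exact: Or33.
Qed.

Lemma zero_uniq a b : is_zero lt a -> is_zero lt b -> a = b.
Proof.
have [_ _ tri _ _] := ord => za zb.
by case: (tri a b) => // h; [case: (zb a)|case: (za b)].
Qed.

Lemma succ_uniq z a b : is_succ lt z a -> is_succ lt z b -> a = b.
Proof.
have [irr tr tri _ _] := ord => -[za ha] [zb hb].
case: (tri a b) => // h.
- case: (hb _ h) => [h'|e]; last by rewrite e in za; case: (irr z).
  by case: (irr z); exact: tr za h'.
- case: (ha _ h) => [h'|e]; last by rewrite e in zb; case: (irr z).
  by case: (irr z); exact: tr zb h'.
Qed.

Lemma alpha_lt n g : ~ is_zero lt g -> lt (alpha n g) g.
Proof.
have [_ hs hl] := asp => nz.
case: (ordinal_cases g) => [//|[z sz]|lg].
- by rewrite (hs n z g sz); case: sz.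
- by case: (hl g lg) => _ /(_ n) [].
Qed.

(* alpha_n g is zero for some n iff it is for all n (only at g = 1). *)
Lemma alpha_zero_iff n g : ~ is_zero lt g ->
  is_zero lt (alpha n g) <-> is_zero lt (alpha 0 g).
Proof.
have [_ hs hl] := asp => nz.
case: (ordinal_cases g) => [//|[z sz]|lg].
- by rewrite (hs n z g sz) (hs 0%N z g sz).
- have [_ nz_alpha _] := hl g lg.
  by split=> h; [case: (nz_alpha n)|case: (nz_alpha 0%N)].
Qed.

(* A nonzero ordinal is determined by its sequence (alpha_n g)_n: for a
   successor the sequence is constant, for a limit it is strictly increasing
   and cofinal. *)
Lemma alpha_inj a b : ~ is_zero lt a -> ~ is_zero lt b ->
  (forall n, alpha n a = alpha n b) -> a = b.
Proof.
have [irr tr tri _ _] := ord; have [_ hs hl] := asp => nza nzb eqn.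
case: (ordinal_cases a) => [//|[z sz]|la];
  case: (ordinal_cases b) => [//|[z' sz']|lb].
- have ezz : z = z' by rewrite -(hs 0%N z a sz) -(hs 0%N z' b sz') eqn.
  by move: sz'; rewrite -ezz; exact: succ_uniq.
- have [+ _ _] := hl b lb => /(_ 0%N).
  by rewrite -!eqn (hs 0%N z a sz) (hs 1%N z a sz) => /irr.
- have [+ _ _] := hl a la => /(_ 0%N).
  by rewrite !eqn (hs 0%N z' b sz') (hs 1%N z' b sz') => /irr.
- have [_ ha2 ha3] := hl a la; have [_ hb2 hb3] := hl b lb.
  case: (tri a b) => // h.
  + have [n] := hb3 _ h; rewrite -eqn => hn.
    by case: (irr a); apply: tr hn _; case: (ha2 n).
  + have [n] := ha3 _ h; rewrite eqn => hn.
    by case: (irr b); apply: tr hn _; case: (hb2 n).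
Qed.

Fixpoint nonzero_path (w : seq nat) (g : B) : Prop :=
  match w with
  | [::] => ~ is_zero lt g /\ ~ is_zero lt (alpha 0 g)
  | n :: w' => ~ is_zero lt g /\ nonzero_path w' (alpha n g)
  end.

Lemma nonzero_path_inj a b : ~ is_zero lt a -> ~ is_zero lt b ->
  (forall w, nonzero_path w a <-> nonzero_path w b) -> a = b.
Proof.
have [_ _ _ wf _] := ord.
elim: (wf a) b => {}a _ IH b nza nzb same_paths.
apply: alpha_inj => // n.
have zero0 : is_zero lt (alpha 0 a) <-> is_zero lt (alpha 0 b).
  have [ab ba] := same_paths [::].
  split=> z0; apply: boolp.contrapT => nz0.
  - by have [] := ba (conj nzb nz0).
  - by have [] := ab (conj nza nz0).
have [za|nza_n] := boolp.EM (is_zero lt (alpha n a)).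
  apply: (zero_uniq za).
  by apply/(alpha_zero_iff n nzb)/zero0/(alpha_zero_iff n nza).
have nzb_n : ~ is_zero lt (alpha n b).
  by move=> /(alpha_zero_iff n nzb) /zero0 /(alpha_zero_iff n nza).
apply: IH (alpha_lt n nza) _ nza_n nzb_n _ => w.
have [ab ba] := same_paths (n :: w).
by split=> h; [case: (ab (conj nza h))|case: (ba (conj nzb h))].
Qed.

End ordinals.

Section lebesgue_extension.
Variables (R : realType) (m : set R -> \bar R).
Hypothesis em : extends_lebesgue m.

Lemma extension_itv (a b : R) : 0 <= a -> a <= b -> b <= 1 ->
  m [set x | a < x < b] = (b - a)%:E.
Proof.
move=> a0 ab b1; rewrite -set_itvoo em; last exact: measurable_itv.
- rewrite lebesgue_measure_itv /= lte_fin.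
  by case: ltgtP ab => // -> _; rewrite subrr.
- move=> x /= /[!in_itv] /= /andP[ax xb]; apply/andP; split.
  + exact: le_lt_trans ax.
  + exact: lt_le_trans b1.
Qed.

Lemma extension0 : m set0 = 0%E.
Proof. by rewrite em ?measure0. Qed.

Lemma extension_I : m (Iset R) = 1%E.
Proof. by rewrite [Iset R]/Iset extension_itv ?subr0. Qed.

Lemma extension_upper_half : m [set x | 2^-1 < x < 1] = (2^-1)%:E.
Proof.
have half1 : 2^-1 <= 1 :> R by rewrite invf_le1 // ler1n.
by rewrite extension_itv ?invr_ge0 //; congr EFin; lra.
Qed.

End lebesgue_extension.

Section generated_sigma_algebra.
Variables (T : Type) (D : set T) (G : set (set T)).

Lemma sigma_algebra_bigcup_count (I : countType) (F : I -> set T) :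
  (forall i, <<s D, G >> (F i)) -> <<s D, G >> (\bigcup_i F i).
Proof.
move=> sigmaF.
have -> : \bigcup_i F i =
    \bigcup_k (if unpickle k is Some i then F i else set0).
  apply/seteqP; split=> s /= [i _ Fis].
    by exists (pickle i) => //; rewrite pickleK.
  by move: Fis; case: (unpickle i) => [j Fjs|//]; exists j.
apply: sigma_algebra_bigcup => k.
by case: (unpickle k) => [i|]; [exact: sigmaF|exact: sigma_algebra0].
Qed.

Lemma sigma_algebra_setU A1 A2 :
  <<s D, G >> A1 -> <<s D, G >> A2 -> <<s D, G >> (A1 `|` A2).
Proof.
move=> h1 h2; rewrite -bigcup2E; apply: sigma_algebra_bigcup => -[|[|n]] //=.
exact: sigma_algebra0.
Qed.

End generated_sigma_algebra.

Definition cyl (R : realType) (B : Type) (D : B -> Prop) : set (R * B) :=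
  [set s | Sstate R B s /\ D s.2].
Arguments cyl R {B} D.

Lemma fiber_zero (R : realType) (B : Type) (lt : B -> B -> Prop) (a : B) :
  ordinal_le_omega1 lt -> is_zero lt a ->
  Iset R `*` [set a] = cyl R (is_zero lt).
Proof.
move=> ord za; apply/seteqP; split=> -[x g] /= => [[Ix ->]|[[Ix _] zg]].
  by do !split.
by split; [|apply: (zero_uniq ord)].
Qed.

Lemma section_cyl (R : realType) (B : Type) (D : B -> Prop) g :
  section (cyl R D) g = [set x | Iset R x /\ D g].
Proof. by apply/seteqP; split=> x /=; [case=> -[]|case]. Qed.

Lemma section_cyl_in (R : realType) (B : Type) (D : B -> Prop) g :
  D g -> section (cyl R D) g = Iset R.
Proof.
by move=> Dg; rewrite section_cyl; apply/seteqP; split=> [x []|x Ix].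
Qed.

Lemma section_cyl_out (R : realType) (B : Type) (D : B -> Prop) g :
  ~ D g -> section (cyl R D) g = set0.
Proof. by move=> Dg; rewrite section_cyl; apply/seteqP; split=> x /=; case. Qed.

Lemma section_state (R : realType) (B : Type) g :
  section (Sstate R B) g = Iset R.
Proof. by apply/seteqP; split=> x /=; [case|]. Qed.

Lemma ratr_half (R : realType) : ratr (2^-1 : rat) = (2^-1 : R).
Proof. by rewrite fmorphV rmorph_nat. Qed.

Definition phi_half : Defs.form := FDiam 0 (2^-1) FTop.
Definition phi_base : Defs.form := FDiam 0 (2^-1) phi_half.

Fixpoint path_form (w : seq nat) : Defs.form :=
  if w is n :: w' then FDiam n 0 (path_form w') else phi_base.

Lemma wf_path_form w : wf_form (path_form w).
Proof. by elim: w => [|n w IH] //=; rewrite IH. Qed.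

Section kernels.
Variables (R : realType) (B : Type) (lt : B -> B -> Prop).
Variables (alpha : nat -> B -> B) (q : nat -> R) (m0 m1 : set R -> \bar R).
Hypotheses (e0 : extends_lebesgue m0) (e1 : extends_lebesgue m1).

Local Notation S := (Sstate R B).
Local Notation tau := (tauS lt alpha q m0 m1).
Local Notation semS := (sem S tau).

Lemma sem_diam n r f :
  semS (FDiam n r f) = [set s | S s /\ ((ratr r)%:E < tau n s (semS f))%E].
Proof. by []. Qed.

Lemma tau_zero n (s : R * B) A : is_zero lt s.2 ->
  tau n s A = (s.1%:E * m0 (section A s.2))%E.
Proof. by rewrite /tauS; case: pselect. Qed.

Lemma tau_nonzero n (s : R * B) A c : ~ is_zero lt s.2 ->
  m0 (section A (alpha n s.2)) = c -> m1 (section A (alpha n s.2)) = c ->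
  tau n s A = c.
Proof.
rewrite /tauS; case: pselect => [za|_] /= nz h0 h1; first by case: nz.
by case: (_ < _).
Qed.

Lemma tau_cyl_in n (s : R * B) (D : B -> Prop) :
  ~ is_zero lt s.2 -> D (alpha n s.2) -> tau n s (cyl R D) = 1%E.
Proof.
move=> nz D_alpha.
by apply: tau_nonzero; rewrite // section_cyl_in // extension_I.
Qed.

Lemma tau_cyl_out n (s : R * B) (D : B -> Prop) :
  ~ is_zero lt s.2 -> ~ D (alpha n s.2) -> tau n s (cyl R D) = 0%E.
Proof.
move=> nz D_alpha.
by apply: tau_nonzero; rewrite // section_cyl_out // extension0.
Qed.

Lemma sem_threshold (r : rat) : ratr r < 1 :> R ->
  semS (FDiam 0 r FTop) = [set s | S s /\ (is_zero lt s.2 -> ratr r < s.1)].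
Proof.
move=> r1; apply/seteqP; split=> -[x g] /= [Sxg H]; split=> //.
- by move=> zg; move: H; rewrite tau_zero // section_state extension_I // mule1.
- have [zg|nzg] := pselect (is_zero lt g).
    by rewrite tau_zero // section_state extension_I // mule1 lte_fin; exact: H.
  have -> : tau 0 (x, g) S = 1%E.
    by apply: tau_nonzero; rewrite // section_state extension_I.
  by rewrite lte_fin.
Qed.

Lemma sem_phi_half :
  semS phi_half = [set s | S s /\ (is_zero lt s.2 -> 2^-1 < s.1)].
Proof. by rewrite sem_threshold ratr_half // invf_lt1 // ltr1n. Qed.

Lemma section_half_zero g :
  is_zero lt g -> section (semS phi_half) g = [set x | 2^-1 < x < 1].
Proof.
move=> zg; rewrite sem_phi_half; apply/seteqP; split=> x /=.
- by case=> [[/andP[_ x1] _] /(_ zg) hx]; apply/andP.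
- move=> /andP[hx x1]; split=> //; split=> //; apply/andP; split=> //.
  by apply: lt_trans hx; rewrite invr_gt0.
Qed.

Lemma section_half_nonzero g :
  ~ is_zero lt g -> section (semS phi_half) g = Iset R.
Proof.
move=> nzg; rewrite sem_phi_half; apply/seteqP; split=> x /=.
  by case=> [[]].
by move=> Ix; do !split.
Qed.

(* < 0 >_{>1/2} < 0 >_{>1/2} T defines the ordinals g with g <> 0 and
   alpha_0(g) <> 0: at g = 0 or alpha_0(g) = 0 the kernel only sees the
   section ]1/2, 1[ of [[phi_half]], of measure 1/2. *)
Lemma sem_phi_base :
  semS phi_base = cyl R (fun g => ~ is_zero lt g /\ ~ is_zero lt (alpha 0 g)).
Proof.
rewrite sem_diam /cyl ratr_half; apply/seteqP; split=> -[x g] /= [Sxg H].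
- have [/andP[/= x0 x1] _] := Sxg.
  have [zg|nzg] := pselect (is_zero lt g).
    move: H; rewrite tau_zero // section_half_zero //.
    by rewrite extension_upper_half // -EFinM lte_fin /= => H; lra.
  split=> //; split=> // za; move: H.
  have -> : tau 0 (x, g) (semS phi_half) = (2^-1)%:E.
    by apply: tau_nonzero; rewrite ?section_half_zero ?extension_upper_half.
  by rewrite ltxx.
- split=> //; case: H => nzg nza.
  have -> : tau 0 (x, g) (semS phi_half) = 1%E.
    by apply: tau_nonzero; rewrite ?section_half_nonzero ?extension_I.
  by rewrite lte_fin invf_lt1 // ltr1n.
Qed.

Lemma sem_diam_cyl n f (D : B -> Prop) :
  (forall g, is_zero lt g -> ~ D g) -> semS f = cyl R D ->
  semS (FDiam n 0 f) = cyl R (fun g => ~ is_zero lt g /\ D (alpha n g)).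
Proof.
move=> Dnz semf; rewrite sem_diam semf /cyl rmorph0.
apply/seteqP; split=> -[x g] /= [Sxg H]; split=> //.
- have [zg|nzg] := pselect (is_zero lt g).
    move: H; rewrite tau_zero // section_cyl_out ?extension0 ?mule0 ?ltxx //.
    exact: Dnz.
  split=> //; apply: boolp.contrapT => nD; move: H.
  by rewrite tau_cyl_out ?ltxx.
- by case: H => nzg Dg; rewrite tau_cyl_in ?lte01.
Qed.

Lemma sem_path_form w : semS (path_form w) = cyl R (nonzero_path lt alpha w).
Proof.
elim: w => [|n w IH]; first exact: sem_phi_base.
apply: sem_diam_cyl IH => g zg.
by case: w => [|k w] /= [].
Qed.

Local Notation sigmaL := (sigma_L S tau).

Lemma sigmaL_sem f : wf_form f -> sigmaL (semS f).
Proof. by move=> wff; apply: sub_sigma_algebra; exists f. Qed.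

(* The zero fiber: the complement of [[< 0 >_{>r} T]] is
   { (x, 0) | x <= r }, and these exhaust it as r -> 1. *)
Lemma sigmaL_zero : sigmaL (cyl R (is_zero lt)).
Proof.
pose r k : rat := 1 - (k.+1%:R)^-1.
have ratr_r k : ratr (r k) = 1 - (k.+1%:R)^-1 :> R.
  by rewrite rmorphB rmorph1 fmorphV rmorph_nat.
have inv_pos k : 0 < (k.+1%:R : R)^-1 by rewrite invr_gt0.
have r_lt1 k : ratr (r k) < 1 :> R by rewrite ratr_r gtrBl.
have wf_r k : wf_form (FDiam 0 (r k) FTop).
  rewrite /= andbT /r gerBl invr_ge0 ler0n andbT subr_ge0.
  by rewrite invf_le1 // ler1n.
suff -> : cyl R (is_zero lt) =
    \bigcup_k (S `\` [set s | S s /\ (is_zero lt s.2 -> ratr (r k) < s.1)]).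
  apply: sigma_algebra_bigcup => k; rewrite -sem_threshold //.
  exact: sigma_algebraCD (sigmaL_sem (wf_r k)).
apply/seteqP; split=> -[x g] => [[Sxg zg]|[k _ [Sxg H]]].
- have [/andP[_ /= x1] _] := Sxg; have [k xk] := ltr_add_invr x1.
  exists k => //; split=> // -[_ /(_ zg) /=].
  by rewrite ratr_r ltrBlDr => /lt_trans/(_ xk); rewrite ltxx.
- by split=> //; apply: boolp.contrapT => nzg; apply: H.
Qed.

Definition agree (w : seq nat) (a : B) : set (R * B) :=
  [set s | S s /\ (nonzero_path lt alpha w s.2 <-> nonzero_path lt alpha w a)].

Lemma sigmaL_agree w a : sigmaL (agree w a).
Proof.
have [wa|nwa] := pselect (nonzero_path lt alpha w a).
  suff -> : agree w a = semS (path_form w).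
    exact: sigmaL_sem (wf_path_form w).
  rewrite sem_path_form /cyl; apply/seteqP.
  by split=> s /= [Ss h]; split=> //; tauto.
suff -> : agree w a = S `\` semS (path_form w).
  exact: sigma_algebraCD (sigmaL_sem (wf_path_form w)).
rewrite sem_path_form /cyl; apply/seteqP.
by split=> s /= [Ss h]; split=> //; tauto.
Qed.

Lemma fiber_nonzero a : ordinal_le_omega1 lt -> alpha_spec lt alpha ->
  ~ is_zero lt a ->
  Iset R `*` [set a] =
  S `\` (cyl R (is_zero lt) `|` \bigcup_w (S `\` agree w a)).
Proof.
move=> ord asp nza; apply/seteqP; split=> -[x g] /=.
- move=> [Ix ga]; rewrite {g}ga; split; first by split.
  by move=> [[_ //]|[w _ [_ []]]]; split=> //; split.
- move=> [Sxg H]; split; first by case: Sxg.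
  have nzg : ~ is_zero lt g by move=> zg; apply: H; left.
  apply: (nonzero_path_inj ord asp nzg nza) => w.
  apply: boolp.contrapT => disagree; apply: H; right.
  by exists w => //; split=> // -[].
Qed.

End kernels.

Theorem lemma5p5 (R : realType) (B : Type) (lt : B -> B -> Prop)
  (alpha : nat -> B -> B) (V : set R) (m0 m1 : set R -> \bar R)
  (q : nat -> R) :
  ordinal_le_omega1 lt ->
  alpha_spec lt alpha ->
  V `<=` Iset R ->
  ~ lebesgue_measurable V ->
  measure_on (BV V) m0 -> measure_on (BV V) m1 ->
  extends_lebesgue m0 -> extends_lebesgue m1 ->
  m0 V <> m1 V ->
  rat_enum q ->
  forall a : B,
    sigma_L (Sstate R B) (tauS lt alpha q m0 m1) (Iset R `*` [set a]).
Proof.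
move=> ord asp _ _ _ _ e0 e1 _ _ a.
have sigma_zero : sigma_L (Sstate R B) (tauS lt alpha q m0 m1)
    (cyl R (is_zero lt)) := sigmaL_zero e0 e1.
have [za|nza] := pselect (is_zero lt a).
  by rewrite (fiber_zero R ord za).
rewrite (fiber_nonzero R ord asp nza).
apply: sigma_algebraCD; apply: sigma_algebra_setU sigma_zero _.
apply: sigma_algebra_bigcup_count => w.
exact: sigma_algebraCD (sigmaL_agree e0 e1 w a).
Qed.
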